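(* Fix an integer $k\ge1$ and $p\in(0,1)$. Let $T_{k+1}$ be the number of $k$-simplices of $X(n,p)$ that are critical for the lexicographical matching. Then there exist a constant $C_{p,k}>0$ and an integer $N_{p,k}$, both independent of $n$, such that for all $n\ge N_{p,k}$, \[ \mathrm{Var}(T_{k+1})\ge C_{p,k}\,n^{2k}. \]
   Context: $G(n,p)$ is the random graph on $[n]$ where each of the $\binom n2$ edges is present independently with probability $p$; write $Y_{i,j}=Y_{j,i}$ for the edge indicator of $\{i,j\}$. $X(n,p)$ is the clique complex of $G\sim G(n,p)$: its simplices are the nonempty vertex sets spanning cliques in $G$; a $k$-simplex has $k+1$ vertices. Lexicographical matching on a simplicial complex $\mathcal{L}$: for $s\in\mathcal{L}$ let $I_{\mathcal{L}}(s)=\{j: j<\min(s),\ s\cup\{j\}\in\mathcal{L}\}$; whenever nonempty, pair $s$ with $s\cup\{\min I_{\mathcal{L}}(s)\}$. A simplex is critical if it is in no pair. Explicitly, with $C_{k+1}$ the set of $(k+1)$-subsets of $[n]$ and $s_-=s\setminus\{\min s\}$, \[ T_{k+1}=\sum_{s\in C_{k+1}}\prod_{i\ne j\in s}Y_{i,j}\Bigl[\prod_{i=1}^{\min(s)-1}\Bigl(1-\prod_{j\in s}Y_{i,j}\Bigr)-\prod_{i=1}^{\min(s)-1}\Bigl(1-\prod_{j\in s_-}Y_{i,j}\Bigr)\Bigr]. \] *)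

From mathcomp Require Import all_boot all_order all_algebra.
From mathcomp Require Import reals.
Set Implicit Arguments. Unset Strict Implicit. Unset Printing Implicit Defensive.
Import Order.TTheory GRing.Theory Num.Theory.

(* Vertex set [n] is 'I_n (0-based; the order is the same as on {1..n}).
   A graph on [n] is a set of 2-subsets of 'I_n. *)
Definition edges (n : nat) : {set {set 'I_n}} := [set e : {set 'I_n} | #|e| == 2].

Definition is_graph (n : nat) (G : {set {set 'I_n}}) : bool := G \subset edges n.

(* simplices of the clique complex X(G): nonempty vertex sets spanning cliques *)
Definition clique (n : nat) (G : {set {set 'I_n}}) (s : {set 'I_n}) : bool :=
  (s != set0) && [forall i in s, forall j in s, (i != j) ==> ([set i; j] \in G)].

(* min(s) as a natural number (s nonempty in all uses) *)
Definition smin (n : nat) (s : {set 'I_n}) : nat := \big[minn/n]_(i in s) val i.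

Definition Iset (n : nat) (G : {set {set 'I_n}}) (s : {set 'I_n}) : {set 'I_n} :=
  [set j | (val j < smin s)%N && clique G (j |: s)].

(* s is paired (as the larger simplex) with some t: s = t ∪ {min I_L(t)} *)
Definition matched_down (n : nat) (G : {set {set 'I_n}}) (s : {set 'I_n}) : bool :=
  [exists t : {set 'I_n}, exists j : 'I_n,
     [&& clique G t, j \in Iset G t,
         [forall j' in Iset G t, (val j <= val j')%N] & s == j |: t]].

(* critical simplex of the lexicographical matching: in L and in no pair *)
Definition critical (n : nat) (G : {set {set 'I_n}}) (s : {set 'I_n}) : bool :=
  [&& clique G s, Iset G s == set0 & ~~ matched_down G s].

Definition Tcrit (n k : nat) (G : {set {set 'I_n}}) : nat :=
  #|[set s : {set 'I_n} | (#|s| == k.+1) && critical G s]|.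

Local Open Scope ring_scope.

Definition gnp_weight (R : realType) (n : nat) (p : R) (G : {set {set 'I_n}}) : R :=
  \prod_(e in edges n) (if e \in G then p else 1 - p).

Definition gnp_E (R : realType) (n : nat) (p : R) (f : {set {set 'I_n}} -> R) : R :=
  \sum_(G : {set {set 'I_n}} | is_graph G) gnp_weight p G * f G.

Definition gnp_Var (R : realType) (n : nat) (p : R) (f : {set {set 'I_n}} -> R) : R :=
  gnp_E p (fun G => (f G - gnp_E p f) ^+ 2).

From mathcomp Require Import all_boot all_order all_algebra.
From mathcomp Require Import reals.
From mathcomp Require Import zify ring.
Set Implicit Arguments. Unset Strict Implicit. Unset Printing Implicit Defensive.
Import Order.TTheory GRing.Theory Num.Theory.

(* Condition on the edge e01 = {0, 1}: the variance of T is at least p (1 - p)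
   times the mean of (T(G) - T(G + e01))^2 over the graphs G without e01. Call a
   (k+1)-set s with 1 in s and 0 not in s full in G when every edge of s + {0}
   except e01 is present. Adding e01 destroys the criticality of every full s
   (0 enters I(s)) and creates no critical simplex (one containing 0 is matched
   down to s - {0}, one avoiding 0 was already critical in G), so T drops by at
   least the number A of full sets. Hence Var T >= p (1 - p) E[A^2]
   >= p (1 - p) (E A)^2 >= p (1 - p) (C(n, k) p^(2^(k+2)))^2, of order n^(2k). *)

Section BernoulliSubsets.
Variables (R : realDomainType) (T : finType) (p : R).
Local Open Scope ring_scope.
Implicit Types (D G S : {set T}).

Lemma sum_subsets_split D e (F : {set T} -> R) : e \in D ->
  \sum_(G : {set T} | G \subset D) F G =
  \sum_(G : {set T} | G \subset D :\ e) (F G + F (e |: G)).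
Proof.
move=> De; rewrite (bigID (fun G => e \in G)) /= addrC big_split /=; congr (_ + _).
  by apply: eq_bigl => G; rewrite subsetD1.
rewrite (reindex_onto (fun G => e |: G) (fun G => G :\ e)) /=; last first.
  by move=> G /andP [_ eG]; exact: setD1K.
apply: eq_bigl => G; rewrite setU11 andbT subsetD1; apply/idP/idP.
  case/andP=> GeD /eqP <-; rewrite setD11 andbT.
  by apply: subset_trans GeD; rewrite subsetDl.
case/andP=> GD eG; rewrite setU1K // eqxx andbT.
by apply/subsetP => x /setU1P [->|/(subsetP GD)].
Qed.

Lemma prod_subsets_split D e (h : T -> bool -> R) G : e \in D -> G \subset D :\ e ->
  \prod_(x in D) h x (x \in G) = h e false * \prod_(x in D :\ e) h x (x \in G) /\
  \prod_(x in D) h x (x \in e |: G) = h e true * \prod_(x in D :\ e) h x (x \in G).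
Proof.
move=> De; rewrite subsetD1 => /andP [_ eG].
rewrite !(bigD1 e De) /= (negbTE eG) setU11; split; congr (_ * _).
  by apply: eq_bigl => x; rewrite in_setD1 andbC.
apply: eq_big => [x|x]; first by rewrite in_setD1 andbC.
by case/andP=> _ xe; rewrite in_setU1 (negbTE xe).
Qed.

Lemma sum_subsets_prod D (h : T -> bool -> R) :
  \sum_(G : {set T} | G \subset D) \prod_(x in D) h x (x \in G) =
  \prod_(x in D) (h x false + h x true).
Proof.
elim: {D}_.+1 {-2}D (ltnSn #|D|) => // m IHm D; rewrite ltnS => leDm.
have [->|[e De]] := set_0Vmem D.
  by rewrite (eq_bigl (pred1 set0)) ?big_pred1_eq ?big_set0 // => G; rewrite subset0.
rewrite (sum_subsets_split _ De) (bigD1 e De) /=.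
transitivity (\sum_(G : {set T} | G \subset D :\ e)
    (h e false + h e true) * \prod_(x in D :\ e) h x (x \in G)).
  apply: eq_bigr => G GDe; have [-> ->] := prod_subsets_split h De GDe.
  by rewrite mulrDl.
rewrite -mulr_sumr IHm; last by rewrite (cardsD1 e D) De in leDm.
by congr (_ * _); apply: eq_bigl => x; rewrite in_setD1 andbC.
Qed.

Definition bern_weight D G : R := \prod_(x in D) (if x \in G then p else 1 - p).

Definition bern_E D (F : {set T} -> R) : R :=
  \sum_(G : {set T} | G \subset D) bern_weight D G * F G.

Lemma bern_E_prod D (g : T -> bool -> R) :
  bern_E D (fun G => \prod_(x in D) g x (x \in G)) =
  \prod_(x in D) ((1 - p) * g x false + p * g x true).
Proof.
have := sum_subsets_prod D (fun x b => (if b then p else 1 - p) * g x b) => /= <-.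
by apply: eq_bigr => G _; rewrite -big_split.
Qed.

Lemma bern_E_split D e (F : {set T} -> R) : e \in D ->
  bern_E D F = bern_E (D :\ e) (fun G => (1 - p) * F G + p * F (e |: G)).
Proof.
move=> De; rewrite /bern_E /bern_weight (sum_subsets_split _ De); apply: eq_bigr => G GDe.
have /= [-> ->] := prod_subsets_split (fun x b => if b then p else 1 - p) De GDe.
by ring.
Qed.


Lemma bern_E1 D : bern_E D (fun=> 1) = 1.
Proof.
have := bern_E_prod D (fun _ _ => 1); rewrite /= big1 // => ->.
by rewrite big1 // => x _; ring.
Qed.

Lemma bern_E_subset D S : S \subset D -> bern_E D (fun G => (S \subset G)%:R) = p ^+ #|S|.
Proof.
move=> SD; pose g x (b : bool) : R := if x \in S then b%:R else 1.
transitivity (bern_E D (fun G => \prod_(x in D) g x (x \in G))).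
  apply: eq_bigr => G _; congr (_ * _); rewrite /g -big_mkcondr /=.
  have [SG|/subsetPn [x xS xG]] := boolP (S \subset G).
    by rewrite big1 // => x /andP [_ /(subsetP SG) ->].
  by rewrite (bigD1 x) ?(subsetP SD) //= (negbTE xG) mul0r.
rewrite (bern_E_prod D g) /g.
transitivity (\prod_(x in D | x \in S) p).
  by rewrite big_mkcondr /=; apply: eq_bigr => x _; case: ifP => _; ring.
rewrite (eq_bigl (mem S)) ?prodr_const // => x.
by rewrite /= andb_idl // => /(subsetP SD).
Qed.

Hypotheses (p_ge0 : 0 <= p) (p_le1 : p <= 1).

Lemma bern_weight_ge0 D G : 0 <= bern_weight D G.
Proof. by apply: prodr_ge0 => x _; case: ifP; rewrite ?subr_ge0. Qed.

Lemma bern_E_le D F H : (forall G, G \subset D -> F G <= H G) ->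
  bern_E D F <= bern_E D H.
Proof. by move=> FH; apply: ler_sum => G GD; rewrite ler_wpM2l ?bern_weight_ge0 ?FH. Qed.

Lemma bern_E_sqr_le D A : bern_E D A ^+ 2 <= bern_E D (fun G => A G ^+ 2).
Proof.
set m := bern_E D A.
have : 0 <= bern_E D (fun G => (A G - m) ^+ 2).
  by apply: sumr_ge0 => G _; rewrite mulr_ge0 ?bern_weight_ge0 ?sqr_ge0.
suff -> : bern_E D (fun G => (A G - m) ^+ 2) = bern_E D (fun G => A G ^+ 2) - m ^+ 2.
  by rewrite subr_ge0.
transitivity (\sum_(G : {set T} | G \subset D) (bern_weight D G * A G ^+ 2
    + - (2 * m) * (bern_weight D G * A G) + m ^+ 2 * (bern_weight D G * 1))).
  by apply: eq_bigr => G _; ring.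
rewrite !big_split -!mulr_sumr /=.
rewrite -[\sum_(G : {set T} | G \subset D) bern_weight D G * 1]/(bern_E D (fun=> 1)) bern_E1.
rewrite -/(bern_E D A) -/m -/(bern_E D (fun G => A G ^+ 2)); ring.
Qed.

(* Conditionally on the other coordinates, [e] is a two-point variable whose
   variance is p (1 - p) times the squared jump. *)
Lemma bern_E_sqr_dev_ge D e F m : e \in D ->
  p * (1 - p) * bern_E (D :\ e) (fun G => (F G - F (e |: G)) ^+ 2) <=
  bern_E D (fun G => (F G - m) ^+ 2).
Proof.
move=> De; rewrite (bern_E_split _ De) /bern_E mulr_sumr; apply: ler_sum => G _.
rewrite mulrCA ler_wpM2l ?bern_weight_ge0 //.
set x := F G; set y := F (e |: G).
have -> : (1 - p) * (x - m) ^+ 2 + p * (y - m) ^+ 2 =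
  ((1 - p) * (x - m) + p * (y - m)) ^+ 2 + p * (1 - p) * (x - y) ^+ 2 by ring.
by rewrite lerDr sqr_ge0.
Qed.

End BernoulliSubsets.

Section CliqueComplex.
Variable n : nat.
Implicit Types (G : {set {set 'I_n}}) (s t : {set 'I_n}) (i : 'I_n).

Lemma smin_le s i : i \in s -> smin s <= i.
Proof.
move=> si; rewrite /smin -big_filter.
have : i \in [seq j <- index_enum 'I_n | j \in s] by rewrite mem_filter si mem_index_enum.
elim: [seq j <- _ | _] => // a l IHl; rewrite inE big_cons => /predU1P [<-|/IHl il].
  exact: geq_minl.
exact: leq_trans (geq_minr _ _) il.
Qed.

Lemma lt_smin s x : x < n -> (forall i, i \in s -> x < i) -> x < smin s.
Proof.
by move=> xn xs; apply: (big_ind (fun m => x < m)) => // a b; rewrite leq_min => ->.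
Qed.

Lemma cliqueP G s :
  reflect (s != set0 /\ {in s &, forall i j, i != j -> [set i; j] \in G}) (clique G s).
Proof.
apply: (iffP andP) => -[s0 sG]; split=> //.
  move=> i j si sj; move/forallP/(_ i): sG; rewrite si => /forallP/(_ j).
  by rewrite sj /= => /implyP.
apply/forallP=> i; apply/implyP=> si; apply/forallP=> j; apply/implyP=> sj.
exact/implyP/sG.
Qed.

Lemma clique_sub G s t : clique G s -> t \subset s -> t != set0 -> clique G t.
Proof.
by move=> /cliqueP [_ sG] /subsetP ts t0; apply/cliqueP; split=> // i j /ts si /ts; exact: sG.
Qed.

Lemma clique_mono G G' s : G \subset G' -> clique G s -> clique G' s.
Proof.
by move=> /subsetP GG' /cliqueP [s0 sG]; apply/cliqueP; split=> // i j si sj /(sG _ _ si sj)/GG'.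
Qed.

Lemma Iset_mono G G' s : G \subset G' -> Iset G s \subset Iset G' s.
Proof.
by move=> GG'; apply/subsetP => j; rewrite !inE => /andP [-> /(clique_mono GG')].
Qed.

End CliqueComplex.

Section LexMatching.
Variables (n k : nat).
Local Notation N := n.+2.
Implicit Types (G : {set {set 'I_N}}) (s t u : {set 'I_N}) (i j : 'I_N).

Definition v0 : 'I_N := ord0.
Definition v1 : 'I_N := Ordinal (isT : 1 < N).
Definition e01 : {set 'I_N} := [set v0; v1].

Definition star_edges s : {set {set 'I_N}} :=
  [set e : {set 'I_N} | [&& #|e| == 2, e \subset v0 |: s & e != e01]].

Definition cands : {set {set 'I_N}} :=
  [set s : {set 'I_N} | [&& #|s| == k.+1, v1 \in s & v0 \notin s]].

Definition full_cands G := [set s in cands | star_edges s \subset G].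

Lemma lt1_v0 i : i < 1 -> i = v0.
Proof. by case: i => -[] // ? ?; apply: val_inj. Qed.

Lemma val_gt0 i : i != v0 -> 0 < i.
Proof. by rewrite lt0n; apply: contra => /eqP i0; apply/eqP/lt1_v0; rewrite i0. Qed.

Lemma e01_subset u : e01 \subset u = (v0 \in u) && (v1 \in u).
Proof.
apply/subsetP/andP => [e01u|[u0 u1] x]; first by rewrite !e01u ?set21 ?set22.
by case/set2P=> ->.
Qed.

Lemma clique_drop_e01 G s : clique (e01 |: G) s -> ~~ (e01 \subset s) -> clique G s.
Proof.
move=> /cliqueP [s0 sG] se; apply/cliqueP; split=> // i j si sj ij.
case/setU1P: (sG _ _ si sj ij) => // ije.
by case/negP: se; rewrite -ije; apply/subsetP => x /set2P [] ->.
Qed.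

Lemma clique_star G s : star_edges s \subset G -> clique (e01 |: G) (v0 |: s).
Proof.
move=> /subsetP sG; apply/cliqueP; split; first by apply/set0Pn; exists v0; exact: setU11.
move=> i j si sj ij; rewrite in_setU1; have [//|ije] := eqVneq [set i; j] e01.
rewrite sG ?orbT // inE cards2 ij ije andbT /=.
by apply/subsetP => x /set2P [] ->.
Qed.

Lemma clique_star_sub G s u : star_edges s \subset G -> u \subset v0 |: s -> u != set0 ->
  ~~ (e01 \subset u) -> clique G u.
Proof. by move=> sG us u0; apply: clique_drop_e01; exact: clique_sub (clique_star sG) us u0. Qed.

Lemma matched_down_v0 G s : v0 \in s -> 1 < #|s| -> clique G s -> matched_down G s.
Proof.
move=> s0 s_gt1 sG; apply/existsP; exists (s :\ v0); apply/existsP; exists v0.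
have t0 : s :\ v0 != set0 by rewrite -card_gt0; rewrite (cardsD1 v0) s0 in s_gt1.
apply/and4P; split; [exact: clique_sub sG (subD1set _ _) t0 | | | by rewrite setD1K].
  rewrite inE setD1K // sG andbT; apply: lt_smin => // i.
  by rewrite in_setD1 => /andP [/val_gt0].
by apply/forallP => j; apply/implyP.
Qed.

Lemma full_cand_critical G s : s \in full_cands G -> e01 \notin G -> critical G s.
Proof.
rewrite !inE => /andP [/and3P [_ s1 s0] sG] e01G.
have s_ne0 : s != set0 by apply/set0Pn; exists v1.
have sG' : clique G s.
  by apply: clique_star_sub sG (subsetU1 _ _) s_ne0 _; rewrite e01_subset (negbTE s0).
rewrite /critical sG' /=; apply/andP; split.
  apply/eqP/setP => j; rewrite !inE; apply/andP => -[js /cliqueP [_ jsG]].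
  rewrite (lt1_v0 (leq_trans js (smin_le s1))) in jsG.
  by move: e01G; rewrite (jsG v0 v1) ?setU11 ?setU1r.
apply/existsP => -[t /existsP [j /and4P [_ jI /forallP jmin /eqP st]]].
move: (jI); rewrite inE => /andP [jt _].
have ts : t \subset s by rewrite st subsetU1.
have t1 : v1 \notin t.
  apply: contra s0 => t1; rewrite st (lt1_v0 (leq_trans jt (smin_le t1))).
  exact: setU11.
have j1 : j = v1 by apply/eqP; move: s1; rewrite st in_setU1 (negbTE t1) orbF eq_sym.
have v0I : v0 \in Iset G t.
  rewrite inE; apply/andP; split.
    apply: lt_smin => // i ti; apply: val_gt0.
    by apply: contraNneq s0 => <-; exact: (subsetP ts).
  apply: clique_star_sub sG _ _ _; first exact: setUS.
    by apply/set0Pn; exists v0; exact: setU11.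
  by rewrite e01_subset !in_setU1 (negbTE t1) orbF andbC.
by move: (jmin v0); rewrite v0I j1.
Qed.

Lemma full_cand_not_critical G s : s \in full_cands G -> ~~ critical (e01 |: G) s.
Proof.
rewrite !inE => /andP [/and3P [_ _ s0] sG]; apply/negP => /and3P [_ /eqP I0 _].
suff : v0 \in Iset (e01 |: G) s by rewrite I0 inE.
rewrite inE clique_star // andbT; apply: lt_smin => // i si; apply: val_gt0.
by apply: contraNneq s0 => <-.
Qed.

Lemma critical_drop_e01 G s : v0 \notin s -> critical (e01 |: G) s -> critical G s.
Proof.
move=> s0 /and3P [sG /eqP I0 md].
have se : ~~ (e01 \subset s) by rewrite e01_subset (negbTE s0).
rewrite /critical (clique_drop_e01 sG se) -subset0 -I0 Iset_mono ?subsetU1 //=.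
apply: contra md => /existsP [t /existsP [j /and4P [tG jI /forallP jmin /eqP st]]].
apply/existsP; exists t; apply/existsP; exists j; rewrite st eqxx andbT.
rewrite (clique_mono (subsetU1 _ _) tG) (subsetP (Iset_mono _ (subsetU1 _ _))) //=.
apply/forallP => i; apply/implyP => iI; rewrite leqNgt; apply/negP => ij.
move: (iI) (jI); rewrite !inE => /andP [_ itG] /andP [jt _].
have t0 : v0 \notin t by apply: contra s0; rewrite st => /setU1r.
have t1 : v1 \notin t.
  by apply/negP => /smin_le/(leq_trans jt); rewrite ltnS leqn0 => /eqP j0; rewrite j0 in ij.
have itG' : clique G (i |: t).
  apply: clique_drop_e01 itG _.
  by rewrite e01_subset !in_setU1 (negbTE t0) (negbTE t1) !orbF; apply/negP => /andP [/eqP <-].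
by move: (jmin i); rewrite inE (ltn_trans ij jt) itG' leqNgt ij.
Qed.

Lemma Tcrit_add_e01 G : 0 < k -> e01 \notin G ->
  Tcrit k (e01 |: G) + #|full_cands G| <= Tcrit k G.
Proof.
move=> k_gt0 e01G; rewrite /Tcrit.
set A := [set s : {set 'I_N} | _ & critical (e01 |: G) s].
have AF : [disjoint A & full_cands G].
  rewrite disjoint_subset; apply/subsetP => s; rewrite inE => /andP [_ sc].
  by apply: contraL sc => /full_cand_not_critical.
case: (leq_card_setU A (full_cands G)) => _; rewrite AF => /eqP <-.
apply/subset_leq_card/subsetP => s /setUP [].
  rewrite !inE => /andP [sk sc]; rewrite sk /=.
  have [s0|] := boolP (v0 \in s); last by move/critical_drop_e01; apply.
  case/and3P: sc => sc _ /negP []; apply: matched_down_v0 => //.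
  by rewrite (eqP sk) ltnS.
move=> sF; rewrite inE full_cand_critical // andbT.
by move: sF; rewrite !inE => /andP [/and3P [-> _ _] _].
Qed.

Lemma star_edges_sub s : star_edges s \subset edges N :\ e01.
Proof. by apply/subsetP => e; rewrite !inE => /and3P [-> _ ->]. Qed.

Lemma card_star_edges s : s \in cands -> #|star_edges s| <= 2 ^ k.+2.
Proof.
rewrite inE => /and3P [/eqP sk _ s0].
have : star_edges s \subset powerset (v0 |: s).
  by apply/subsetP => e; rewrite powersetE inE => /and3P [].
by move/subset_leq_card; rewrite card_powerset cardsU1 s0 sk.
Qed.

Lemma card_full_cands G : #|full_cands G| = \sum_(s in cands) (star_edges s \subset G).
Proof.
rewrite -sum1_card (eq_bigl (fun s => (s \in cands) && (star_edges s \subset G))); last first.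
  by move=> s; rewrite inE.
by rewrite big_mkcondr /=; apply: eq_bigr => s _; case: ifP.
Qed.

Lemma card_cands : 'C(n, k) <= #|cands|.
Proof.
have cardC : #|~: e01| = n.
  by have := cardsC e01; rewrite cards2 card_ord => /eqP; rewrite eqSS => /eqP [].
rewrite -{1}cardC -cards_draws.
have inj : {in [set t : {set 'I_N} | t \subset ~: e01 & #|t| == k] &,
    injective (fun t => v1 |: t)}.
  move=> t1 t2; rewrite !inE => /andP [t1e _] /andP [t2e _].
  have t1v1 : v1 \notin t1 by apply/negP => /(subsetP t1e); rewrite !inE eqxx orbT.
  have t2v1 : v1 \notin t2 by apply/negP => /(subsetP t2e); rewrite !inE eqxx orbT.
  by move/(congr1 (fun u => u :\ v1)); rewrite !setU1K.
rewrite -(card_in_imset inj); apply/subset_leq_card/subsetP => s /imsetP [t].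
rewrite inE => /andP [te /eqP tk] ->.
have tv0 : v0 \notin t by apply/negP => /(subsetP te); rewrite !inE eqxx.
have tv1 : v1 \notin t by apply/negP => /(subsetP te); rewrite !inE eqxx orbT.
by rewrite !inE cardsU1 tv1 tk (negbTE tv0) add1n eqxx.
Qed.

End LexMatching.

Lemma expn_subn_leq_ffact m j : (m - j) ^ j <= m ^_ j.
Proof.
elim: j m => // j IHj m; rewrite ffactnS expnS leq_mul ?leq_subr //.
by rewrite subnS predn_sub IHj.
Qed.

Lemma expn_leq_bin n k : 2 * k + 2 <= n -> n.+2 ^ k <= 2 ^ k * k`! * 'C(n, k).
Proof.
move=> kn; rewrite -mulnA (mulnC k`!) bin_ffact.
have [->|k_gt0] := posnP k; first by [].
apply: (@leq_trans ((2 * (n - k)) ^ k)); first by rewrite leq_exp2r //; lia.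
by rewrite expnMn leq_mul2l expn_subn_leq_ffact orbT.
Qed.

Local Open Scope ring_scope.

Lemma bern_E_full_cands (R : realDomainType) (p : R) n k :
  bern_E p (edges n.+2 :\ e01 n) (fun G => #|full_cands k G|%:R) =
  \sum_(s in cands n k) p ^+ #|star_edges s|.
Proof.
rewrite /bern_E; under eq_bigr do rewrite card_full_cands natr_sum mulr_sumr.
rewrite exchange_big /=; apply: eq_bigr => s _.
exact: bern_E_subset (star_edges_sub s).
Qed.

Lemma Tcrit_var_ge (R : realType) (p : R) n k : 0 <= p -> p <= 1 -> (0 < k)%N ->
  p * (1 - p) * (#|cands n k|%:R * p ^+ (2 ^ k.+2)) ^+ 2 <=
  gnp_Var p (fun G : {set {set 'I_n.+2}} => (Tcrit k G)%:R).
Proof.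
move=> p_ge0 p_le1 k_gt0.
have e01E : e01 n \in edges n.+2 by rewrite inE cards2.
apply: le_trans (bern_E_sqr_dev_ge p_ge0 p_le1 _ _ e01E); apply: ler_wpM2l.
  by rewrite mulr_ge0 ?subr_ge0.
apply: le_trans (bern_E_le p_ge0 p_le1 (F := fun G => #|full_cands k G|%:R ^+ 2) _); last first.
  move=> G; rewrite subsetD1 => /andP [_ e01G].
  have := Tcrit_add_e01 k_gt0 e01G; rewrite -(ler_nat R) natrD -lerBrDl => dev.
  by rewrite ler_pXn2r ?nnegrE ?ler0n // (le_trans _ dev).
apply: le_trans (bern_E_sqr_le p_ge0 p_le1 _ _).
have lb : #|cands n k|%:R * p ^+ (2 ^ k.+2) <=
    bern_E p (edges n.+2 :\ e01 n) (fun G => #|full_cands k G|%:R).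
  rewrite bern_E_full_cands mulr_natl -sumr_const; apply: ler_sum => s sc.
  exact: ler_wiXn2l p_ge0 p_le1 _ _ (card_star_edges sc).
have lb_ge0 : 0 <= #|cands n k|%:R * p ^+ (2 ^ k.+2) by rewrite mulr_ge0 ?exprn_ge0.
by rewrite lerXn2r ?nnegrE // (le_trans lb_ge0 lb).
Qed.

Theorem lemma4p4 (R : realType) (k : nat) (p : R) :
  (1 <= k)%N -> 0 < p -> p < 1 ->
  exists C : R, exists N : nat, 0 < C /\
    forall n : nat, (N <= n)%N ->
      C * (n%:R) ^+ (2 * k) <= gnp_Var p (fun G : {set {set 'I_n}} => (Tcrit k G)%:R).
Proof.
move=> k_gt0 p_gt0 p_lt1; set M := (2 ^ k.+2)%N; set K := (2 ^ k * k`!)%N.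
have K_gt0 : 0 < K%:R :> R by rewrite ltr0n muln_gt0 expn_gt0 fact_gt0.
exists (p * (1 - p) * (p ^+ M / K%:R) ^+ 2), (2 * k + 4)%N; split.
  by rewrite !mulr_gt0 ?subr_gt0 ?exprn_gt0 ?invr_gt0.
case=> [|[|n]] n_ge; [lia | lia |].
have cands_lb : n.+2%:R ^+ k / K%:R <= #|cands n k|%:R :> R.
  rewrite ler_pdivrMr // mulrC -natrX -natrM ler_nat.
  by apply: leq_trans (expn_leq_bin _) _; [lia | rewrite leq_mul2l card_cands orbT].
apply: le_trans (Tcrit_var_ge n (ltW p_gt0) (ltW p_lt1) k_gt0).
rewrite -mulrA; apply: ler_wpM2l; first by rewrite mulr_ge0 ?subr_ge0 ?ltW.
rewrite mulnC exprM -exprMn; apply: lerXn2r.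
- by rewrite nnegrE mulr_ge0 ?divr_ge0 ?exprn_ge0 ?ltW.
- by rewrite nnegrE mulr_ge0 ?ler0n ?exprn_ge0 ?ltW.
by rewrite mulrAC -mulrA mulrC; exact: ler_wpM2r (exprn_ge0 _ (ltW p_gt0)) _ _ cands_lb.
Qed.
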